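(* Let $P,Q\in\mathbb{C}[z_1,\dots,z_d]$ be nonzero polynomials all of whose coefficients are real and non-negative. Then \[ \|P\,Q\|_a\ge\|P\|_a\,\|Q\|_a . \]
   Context: For multi-indices $\alpha\in\mathbb{N}^d$ write $z^\alpha=z_1^{\alpha_1}\cdots z_d^{\alpha_d}$ and $\alpha!=\alpha_1!\cdots\alpha_d!$. The apolar inner product on $\mathbb{C}[z_1,\dots,z_d]$ is $\langle \sum c_\alpha z^\alpha,\sum d_\alpha z^\alpha\rangle_a=\sum_\alpha\alpha!\,c_\alpha\overline{d_\alpha}$, with norm $\|P\|_a=\sqrt{\langle P,P\rangle_a}$. *)

From HB Require Import structures.
From Stdlib Require Import Reals.
From mathcomp Require Import all_boot all_order all_algebra.
From mathcomp Require Import Rstruct.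
From mathcomp Require Import complex.
From mathcomp Require Import mpoly.
Set Implicit Arguments. Unset Strict Implicit. Unset Printing Implicit Defensive.
Import Order.TTheory GRing.Theory Num.Theory.
Local Open Scope ring_scope.

Notation CC := (complex R).

Definition mfact (d : nat) (m : 'X_{1..d}) : nat := \prod_(i < d) (m i)`!.

Definition apolar_inner (d : nat) (P Q : {mpoly CC[d]}) : CC :=
  \sum_(m <- undup (msupp P ++ msupp Q)) (mfact m)%:R * P@_m * (Q@_m)^*.

Definition apolar_norm (d : nat) (P : {mpoly CC[d]}) : CC :=
  sqrtC (apolar_inner P P).

(* All coefficients of P are real and non-negative
   (in a numClosedField, 0 <= c means c is real and non-negative). *)
Definition nonneg_coeffs (d : nat) (P : {mpoly CC[d]}) : Prop :=
  forall m : 'X_{1..d}, 0 <= P@_m.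

(* Expand ||P||_a^2 ||Q||_a^2 as a sum over pairs of monomials (a, b) of
   a! b! p_a^2 q_b^2.  Since a! b! <= (a + b)!, this is at most the sum of
   (a + b)! (p_a q_b)^2; grouping the pairs by g = a + b gives
   sum_g g! sum_{a+b=g} (p_a q_b)^2, and because all products p_a q_b are
   non-negative the inner sum of squares is at most the square of the sum
   sum_{a+b=g} p_a q_b, which is the coefficient of z^g in P Q. *)
From HB Require Import structures.
From Stdlib Require Import Reals.
From mathcomp Require Import all_boot all_order all_algebra.
From mathcomp Require Import Rstruct complex mpoly.
Set Implicit Arguments.
Unset Strict Implicit.
Unset Printing Implicit Defensive.

Import Order.TTheory GRing.Theory Num.Theory.
Local Open Scope ring_scope.

Lemma sum_sqr_le_sqr_sum (R : numDomainType) (I : Type) (s : seq I) (P : pred I)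
    (f : I -> R) :
  (forall i, P i -> 0 <= f i) ->
  \sum_(i <- s | P i) f i ^+ 2 <= (\sum_(i <- s | P i) f i) ^+ 2.
Proof.
move=> f_ge0; elim: s => [|x s IH]; first by rewrite !big_nil expr0n.
rewrite !big_cons; case: ifP => // Px.
have sum_ge0 : 0 <= \sum_(i <- s | P i) f i by apply: sumr_ge0.
rewrite sqrrD -addrA lerD2l (le_trans IH) // lerDr.
by rewrite mulrn_wge0 // mulr_ge0 ?f_ge0.
Qed.

Lemma big_group_by (R : nmodType) (I J : eqType) (s : seq I) (V : seq J)
    (k : I -> J) (F : I -> R) :
  uniq V -> (forall i, i \in s -> k i \in V) ->
  \sum_(i <- s) F i = \sum_(j <- V) \sum_(i <- s | k i == j) F i.
Proof.
move=> uV kV; under [RHS]eq_bigr do rewrite big_mkcond.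
rewrite exchange_big; apply: eq_big_seq => i /kV kiV.
rewrite -big_mkcond (perm_big _ (perm_to_rem kiV)) big_cons eqxx /=.
rewrite big1_seq ?addr0 // => j /andP[/eqP <-].
by rewrite mem_rem_uniqF.
Qed.

Lemma mfactM_leq (d : nat) (a b : 'X_{1..d}) :
  (mfact a * mfact b <= mfact (a + b)%MM)%N.
Proof.
rewrite /mfact -big_split /=; apply: leq_prod => i _.
rewrite mnmDE -(@bin_fact (a i + b i) (a i)) ?leq_addr // addKn.
by rewrite leq_pmull // bin_gt0 leq_addr.
Qed.

Section ApolarNorm.

Variable d : nat.
Implicit Types (P Q X : {mpoly CC[d]}) (s : seq 'X_{1..d}).

Lemma big_msupp_sub (V : nmodType) X s (F : 'X_{1..d} -> CC -> V) :
  uniq s -> {subset msupp X <= s} -> (forall m, F m 0 = 0) ->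
  \sum_(m <- s) F m X@_m = \sum_(m <- msupp X) F m X@_m.
Proof.
move=> us sub F0; rewrite (bigID (mem (msupp X))) /=.
rewrite [X in _ + X]big1 ?addr0 => [|m /memN_msupp_eq0 ->//].
rewrite -big_filter; apply/perm_big/uniq_perm; rewrite ?filter_uniq //.
by move=> m; rewrite mem_filter andb_idr // => /sub.
Qed.

Lemma apolar_inner_selfE X s :
  uniq s -> {subset msupp X <= s} ->
  apolar_inner X X = \sum_(m <- s) (mfact m)%:R * X@_m * (X@_m)^*.
Proof.
move=> us sub; pose F (m : 'X_{1..d}) (c : CC) := (mfact m)%:R * c * c^*.
have F0 m : F m 0 = 0 by rewrite /F mulr0 mul0r.
have subX : {subset msupp X <= undup (msupp X ++ msupp X)}.
  by move=> m mX; rewrite mem_undup mem_cat mX.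
rewrite /apolar_inner (big_msupp_sub (F := F)) ?undup_uniq //.
by rewrite (big_msupp_sub (F := F)).
Qed.

Lemma apolar_inner_self_ge0 X : 0 <= apolar_inner X X.
Proof.
rewrite (@apolar_inner_selfE X (msupp X)) //.
by apply: sumr_ge0 => m _; rewrite -mulrA mulr_ge0 ?ler0n ?mul_conjC_ge0.
Qed.

Lemma apolar_inner_nonnegE X s :
  nonneg_coeffs X -> uniq s -> {subset msupp X <= s} ->
  apolar_inner X X = \sum_(m <- s) (mfact m)%:R * X@_m ^+ 2.
Proof.
move=> X_ge0 us sub; rewrite (apolar_inner_selfE us sub).
by apply: eq_bigr => m _; rewrite geC0_conj // -mulrA.
Qed.

Lemma mcoeffM_pairs P Q g :
  (P * Q)@_g =
    \sum_(ab <- [seq (a, b) | a <- msupp P, b <- msupp Q] | (ab.1 + ab.2)%MM == g)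
      P@_ab.1 * Q@_ab.2.
Proof.
rewrite mpolyME raddf_sum [RHS]big_mkcond /=; apply: eq_bigr => ab _.
by rewrite mcoeffZ mcoeffX; case: eqP; rewrite ?mulr1 ?mulr0.
Qed.

Lemma nonneg_coeffsM P Q :
  nonneg_coeffs P -> nonneg_coeffs Q -> nonneg_coeffs (P * Q).
Proof.
move=> P_ge0 Q_ge0 g; rewrite mcoeffM_pairs.
by apply: sumr_ge0 => ab _; rewrite mulr_ge0.
Qed.

Lemma apolar_inner_selfM P Q :
  nonneg_coeffs P -> nonneg_coeffs Q ->
  apolar_inner P P * apolar_inner Q Q <= apolar_inner (P * Q) (P * Q).
Proof.
move=> P_ge0 Q_ge0; set ST := [seq (a, b) | a <- msupp P, b <- msupp Q].
pose key (ab : 'X_{1..d} * 'X_{1..d}) := (ab.1 + ab.2)%MM.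
pose pq (ab : 'X_{1..d} * 'X_{1..d}) := P@_ab.1 * Q@_ab.2.
set V := undup (msupp (P * Q) ++ map key ST).
have uV : uniq V by apply: undup_uniq.
have splitPQ : apolar_inner P P * apolar_inner Q Q =
    \sum_(ab <- ST) (mfact ab.1)%:R * P@_ab.1 ^+ 2 * ((mfact ab.2)%:R * Q@_ab.2 ^+ 2).
  rewrite (apolar_inner_nonnegE (s := msupp P)) //.
  rewrite (apolar_inner_nonnegE (s := msupp Q)) //.
  by rewrite big_allpairs big_distrl; under eq_bigr do rewrite big_distrr.
have mfact_pq ab : (mfact ab.1)%:R * P@_ab.1 ^+ 2 * ((mfact ab.2)%:R * Q@_ab.2 ^+ 2)
    <= (mfact (key ab))%:R * pq ab ^+ 2 :> CC.
  rewrite exprMn mulrACA -natrM.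
  by rewrite ler_wpM2r ?mulr_ge0 ?exprn_ge0 // ler_nat mfactM_leq.
rewrite splitPQ (le_trans (ler_sum _ (fun ab _ => mfact_pq ab))) //.
rewrite (big_group_by (k := key) _ uV) => [|ab abST]; last first.
  by rewrite mem_undup mem_cat map_f ?orbT.
rewrite (apolar_inner_nonnegE (nonneg_coeffsM P_ge0 Q_ge0) uV); last first.
  by move=> m mPQ; rewrite mem_undup mem_cat mPQ.
apply: ler_sum => g _; rewrite mcoeffM_pairs.
rewrite (eq_bigr (fun ab => (mfact g)%:R * pq ab ^+ 2)) => [|ab /eqP <- //].
rewrite -big_distrr /=; apply: ler_wpM2l; first exact: ler0n.
apply: (@sum_sqr_le_sqr_sum _ _ ST (fun ab => key ab == g) pq) => ab _.
by rewrite mulr_ge0.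
Qed.

End ApolarNorm.

Theorem theorem4p1 (d : nat) (P Q : {mpoly CC[d]}) :
  P != 0 -> Q != 0 -> nonneg_coeffs P -> nonneg_coeffs Q ->
  apolar_norm P * apolar_norm Q <= apolar_norm (P * Q).
Proof.
move=> _ _ P_ge0 Q_ge0; rewrite /apolar_norm.
rewrite -sqrtCM ?nnegrE ?apolar_inner_self_ge0 // ler_sqrtC ?nnegrE //.
- exact: apolar_inner_selfM.
- by rewrite mulr_ge0 ?apolar_inner_self_ge0.
- exact: apolar_inner_self_ge0.
Qed.
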